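(* There are absolute constants $c^*,\kappa>0$ such that for every $k\ge1$, every random variable $Y$ in $[0,1]^k$ with $Y_1\le\dots\le Y_k$ almost surely, and every $s>0$, $$D^{(q)}(r\,|\,Y,\|\cdot\|_\infty,s)\le\frac{\kappa}{k}e^{-r/k}\qquad\text{for all }r\ge c^*k.$$
   Context: $D^{(q)}(r\,|\,Y,\|\cdot\|_\infty,s)=\inf\{(\mathbb E\min_{a\in\mathcal C}\|Y-a\|_\infty^s)^{1/s}:\mathcal C\subset\mathbb R^k\text{ finite},\ \log\#\mathcal C\le r\}$ (natural log). *)

From HB Require Import structures.
From mathcomp Require Import all_boot all_order all_algebra.
From mathcomp Require Import finmap.
From mathcomp Require Import all_classical all_reals all_analysis.
Set Implicit Arguments. Unset Strict Implicit. Unset Printing Implicit Defensive.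
Import Order.TTheory GRing.Theory Num.Theory.
Local Open Scope ring_scope.
Local Open Scope fset_scope.

Definition supnorm {R : realType} {k : nat} (v : 'rV[R]_k) : R :=
  \big[Num.max/0]_(i < k) `| v ord0 i |.

(* min_{a in C} ||y - a||_oo, as an extended real (+oo for empty C) *)
Definition codebook_dist {R : realType} {k : nat} (C : {fset 'rV[R]_k})
  (y : 'rV[R]_k) : \bar R :=
  \big[mine/+oo%E]_(a <- C) (supnorm (y - a))%:E.

Definition quant_error {R : realType} {d} {T : measurableType d}
  (P : probability T R) {k : nat} (Y : T -> 'rV[R]_k) (s : R)
  (C : {fset 'rV[R]_k}) : \bar R :=
  poweR (\int[P]_x (poweR (codebook_dist C (Y x)) s))%E s^-1.

Definition quant_D {R : realType} {d} {T : measurableType d}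
  (P : probability T R) {k : nat} (Y : T -> 'rV[R]_k) (r s : R) : \bar R :=
  ereal_inf [set quant_error P Y s C | C in
     [set C : {fset 'rV[R]_k} | C != fset0 /\ ln (#|` C|%:R) <= r]].

(* Round each coordinate of a nondecreasing point of [0,1]^k down to the grid (1/M)Z with
   M = N k.  Rounding preserves monotonicity, so the nondecreasing grid points form a
   codebook with sup-norm error 1/M and at most C(k + M, k) <= (e (N + 1))^k elements.
   Choosing N + 1 <= e^(r/k - 1) <= 2 N makes log #C <= r and 1/M <= 2e e^(-r/k) / k. *)
From HB Require Import structures.
From mathcomp Require Import all_boot all_order all_algebra.
From mathcomp Require Import finmap.
From mathcomp Require Import all_classical all_reals all_analysis.
From mathcomp Require Import measurable_realfun.
From mathcomp Require Import zify.
Import Order.TTheory GRing.Theory Num.Theory.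
Local Open Scope ring_scope.

Section codebook_dist.
Context {R : realType} {k : nat}.

Lemma supnorm_ge0 (v : 'rV[R]_k) : 0 <= supnorm v.
Proof. exact: bigmax_ge_id. Qed.

Lemma supnorm_le (v : 'rV[R]_k) (e : R) :
  0 <= e -> (forall i, `|v ord0 i| <= e) -> supnorm v <= e.
Proof. by move=> e0 ve; apply: bigmax_le. Qed.

Lemma codebook_dist_ge0 (C : {fset 'rV[R]_k}) y : (0 <= codebook_dist C y)%E.
Proof. by apply: le_bigmin => [|a _]; rewrite ?leey ?lee_fin ?supnorm_ge0. Qed.

Lemma codebook_dist_le {C : {fset 'rV[R]_k}} y {a} :
  a \in C -> (codebook_dist C y <= (supnorm (y - a))%:E)%E.
Proof. by move=> aC; apply: ge_bigmin_seq. Qed.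

End codebook_dist.

Section measurability.
Context {R : realType} {d : measure_display} {T : measurableType d}.

Lemma measurable_bigmaxr (I : Type) (s : seq I) (g : I -> T -> R) :
  (forall i, measurable_fun setT (g i)) ->
  measurable_fun setT (fun x => \big[Num.max/0]_(i <- s) g i x).
Proof.
move=> mg; elim: s => [|i s IH].
  by under eq_fun do rewrite big_nil; exact: measurable_cst.
by under eq_fun do rewrite big_cons; exact: measurable_maxr.
Qed.

Lemma measurable_bigmine (I : Type) (s : seq I) (g : I -> T -> \bar R) :
  (forall i, measurable_fun setT (g i)) ->
  measurable_fun setT (fun x => \big[mine/+oo%E]_(i <- s) g i x).
Proof.
move=> mg; elim: s => [|i s IH].
  by under eq_fun do rewrite big_nil; exact: measurable_cst.
by under eq_fun do rewrite big_cons; exact: measurable_mine.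
Qed.

Lemma measurable_codebook_dist {k} (C : {fset 'rV[R]_k}) (Y : T -> 'rV[R]_k) :
  (forall i : 'I_k, measurable_fun setT (fun x => Y x ord0 i)) ->
  measurable_fun setT (fun x => codebook_dist C (Y x)).
Proof.
move=> mY; apply: measurable_bigmine => a; apply/measurable_EFinP.
apply: measurable_bigmaxr => i; under eq_fun do rewrite !mxE.
by apply: measurableT_comp => //; exact: measurable_funB.
Qed.

End measurability.

Section quantization_error.
Context {R : realType} {d : measure_display} {T : measurableType d}.
Local Open Scope ereal_scope.

Lemma poweR_le_EFin (x : \bar R) (e r : R) : (0 <= r)%R -> (0 <= e)%R ->
  0 <= x -> x <= e%:E -> poweR x r <= (e `^ r)%:E.
Proof.
move=> r0 e0; case: x => [x| |] //; rewrite !lee_fin => x0 xe.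
by apply: ge0_ler_powR; rewrite ?nnegrE.
Qed.

Lemma quant_error_le (P : probability T R) k (Y : T -> 'rV[R]_k) (s e : R)
    (C : {fset 'rV[R]_k}) : (0 < s)%R -> (0 <= e)%R ->
  (forall i : 'I_k, measurable_fun setT (fun x => Y x ord0 i)) ->
  {ae P, forall x, codebook_dist C (Y x) <= e%:E} ->
  quant_error P Y s C <= e%:E.
Proof.
move=> s0 e0 mY Ce.
set I := \int[P]_x poweR (codebook_dist C (Y x)) s.
have I0 : 0 <= I by apply: integral_ge0 => x _; exact: poweR_ge0.
have Ie : I <= (e `^ s)%:E.
  apply: (@le_trans _ _ (\int[P]_x (cst (e `^ s)%:E) x)).
    apply: ae_ge0_le_integral => //.
    - by move=> x _; exact: poweR_ge0.
    - exact: measurableT_comp (measurable_poweR _) (measurable_codebook_dist C Y mY).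
    - by move=> x _; rewrite lee_fin powR_ge0.
    - apply: filterS Ce => x Cxe _.
      by apply: poweR_le_EFin => //; [exact: ltW | exact: codebook_dist_ge0].
  by rewrite integral_cst //= probability_setT mule1.
have s1_ge0 : (0 <= s^-1)%R by rewrite invr_ge0 ltW.
have := poweR_le_EFin _ _ _ s1_ge0 (powR_ge0 _ _) I0 Ie.
by rewrite -powRrM mulfV ?gt_eqF // powRr1.
Qed.

Lemma quant_D_le {P : probability T R} {k} {Y : T -> 'rV[R]_k} {r s e : R}
    (C : {fset 'rV[R]_k}) : (0 < s)%R -> (0 <= e)%R ->
  C != fset0 -> (ln (#|` C|%:R) <= r)%R ->
  (forall i : 'I_k, measurable_fun setT (fun x => Y x ord0 i)) ->
  {ae P, forall x, codebook_dist C (Y x) <= e%:E} ->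
  quant_D P Y r s <= e%:E.
Proof.
move=> s0 e0 C0 Cr mY Ce.
apply: (@le_trans _ _ (quant_error P Y s C)); last exact: quant_error_le.
by apply: ereal_inf_lbound; exists C.
Qed.

End quantization_error.

Section monotone_grid.
Context {R : realType} {k M : nat}.

Definition grid_point (t : k.-tuple 'I_M.+1) : 'rV[R]_k :=
  \row_i ((tnth t i)%:R / M%:R).

Definition monotone_grid : {fset 'rV[R]_k} :=
  [fset a in map grid_point (enum [set t : k.-tuple 'I_M.+1 | sorted leq (map val t)])]%fset.

Lemma card_monotone_grid : (#|` monotone_grid| <= 'C(k + M, k))%N.
Proof.
rewrite card_fseq (leq_trans (size_undup _)) // size_map -cardE.
by rewrite card_sorted_tuples.
Qed.

Lemma monotone_grid_approx (y : 'rV[R]_k) : (0 < M)%N ->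
  (forall i, 0 <= y ord0 i <= 1) ->
  (forall i j : 'I_k, (i <= j)%N -> y ord0 i <= y ord0 j) ->
  exists2 a, a \in monotone_grid & supnorm (y - a) <= M%:R^-1.
Proof.
move=> M0 y01 ymon; have Mpos : (0 : R) < M%:R by rewrite ltr0n.
pose g i : 'I_M.+1 := inord (Num.truncn (y ord0 i * M%:R)).
have gE i : val (g i) = Num.truncn (y ord0 i * M%:R).
  have /andP[y0 y1] := y01 i.
  rewrite /g /= inordK // ltnS truncn_le_nat (@le_lt_trans _ _ M%:R) ?ltr_nat //.
  by rewrite -[leRHS]mul1r ler_wpM2r ?ler0n.
exists (grid_point [tuple of map g (ord_tuple k)]).
  rewrite inE /= map_f // mem_enum inE /= -map_comp sorted_map.
  apply: (@sub_sorted _ (relpre val leq)) => [i j /= ij|].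
    by rewrite !gE le_truncn // ler_pM2r // ymon.
  by rewrite -sorted_map val_enum_ord iota_sorted.
apply: supnorm_le => [|i]; first by rewrite invr_ge0 ler0n.
rewrite !mxE tnth_map tnth_ord_tuple gE.
have /andP[y0 _] := y01 i.
have /andP[n_le n_gt] := truncn_itv (mulr_ge0 y0 (ltW Mpos)).
set n := Num.truncn _ in n_le n_gt *.
rewrite ger0_norm; last by rewrite subr_ge0 ler_pdivrMr.
rewrite lerBlDr (_ : _ + _ = n.+1%:R / M%:R); last first.
  by rewrite -natr1 mulrDl mul1r addrC.
by rewrite ler_pdivlMr // ltW.
Qed.

Lemma monotone_grid_neq0 : (0 < M)%N -> monotone_grid != fset0.
Proof.
move=> M0; have [i|i j _|a aG _] := @monotone_grid_approx 0 M0.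
- by rewrite mxE lexx ler01.
- by rewrite !mxE.
- by apply/fset0Pn; exists a.
Qed.

End monotone_grid.

Arguments monotone_grid {R} k M.

Lemma ffact_leq_expn n m : (n ^_ m <= n ^ m)%N.
Proof. by elim: m => // m IH; rewrite ffactnSr expnSr leq_mul // leq_subr. Qed.

Section binomial_bound.
Context {R : realType}.

Lemma natrX_le_expR_fact k : (k%:R : R) ^+ k <= expR k%:R * k`!%:R.
Proof.
case: k => [|k]; first by rewrite expR0 mul1r.
have := expR_ge1Dxn k (ler0n R k.+1).
have k_fact_gt0 : (0 : R) < k.+1`!%:R by rewrite ltr0n fact_gt0.
rewrite -(ler_pM2r k_fact_gt0) mulrDl mul1r divfK ?gt_eqF //.
by apply: le_trans; rewrite lerDr ler0n.
Qed.

Lemma bin_le_expR k N : ('C(k + N * k, k)%:R : R) <= (expR 1 * N.+1%:R) ^+ k.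
Proof.
have k_fact_gt0 : (0 : R) < k`!%:R by rewrite ltr0n fact_gt0.
rewrite -(ler_pM2r k_fact_gt0) -natrM bin_ffact -mulSn.
apply: (@le_trans _ _ (((N.+1 * k) ^ k)%:R)); first by rewrite ler_nat ffact_leq_expn.
rewrite natrX natrM !exprMn -mulrA mulrCA ler_wpM2l ?exprn_ge0 ?ler0n //.
by rewrite -expRM_natl mulr1 natrX_le_expR_fact.
Qed.
End binomial_bound.

Lemma ln_card_monotone_grid {R : realType} {k N : nat} : (0 < k)%N -> (0 < N)%N ->
  ln (#|` @monotone_grid R k (N * k)|%:R) <= (k%:R : R) * (1 + ln N.+1%:R).
Proof.
move=> k0 N0; have Nk0 : (0 < N * k)%N by rewrite muln_gt0 N0.
have eN_gt0 : (0 : R) < expR 1 * N.+1%:R by rewrite mulr_gt0 ?expR_gt0 ?ltr0n.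
rewrite -[X in X + ln _](expRK 1) -lnM ?posrE ?expR_gt0 ?ltr0n // mulr_natl -lnXn //.
rewrite ler_ln ?posrE ?exprn_gt0 ?ltr0n ?cardfs_gt0 ?monotone_grid_neq0 //.
apply: le_trans (bin_le_expR k N); rewrite ler_nat.
exact: card_monotone_grid.
Qed.

Lemma exists_nat_between {R : realType} (E : R) : 3 <= E ->
  exists2 N : nat, (0 < N)%N & N.+1%:R <= E <= 2 * N%:R.
Proof.
move=> E3; have E0 : 0 <= E by apply: le_trans E3.
have n3 : (3 <= Num.truncn E)%N by rewrite truncn_ge_nat.
exists (Num.truncn E).-1; first by rewrite -ltnS prednK ?(leq_trans _ n3).
have /andP[nE En] := truncn_itv E0.
rewrite prednK ?(leq_trans _ n3) // nE /=.
apply: (le_trans (ltW En)); rewrite -natrM ler_nat.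
lia.
Qed.

Theorem lemma4 (R : realType) :
  exists (cstar kappa : R), 0 < cstar /\ 0 < kappa /\
  forall (k : nat), (1 <= k)%N ->
  forall (d : measure_display) (T : measurableType d) (P : probability T R)
    (Y : T -> 'rV[R]_k),
    (forall i : 'I_k, measurable_fun setT (fun x => Y x ord0 i)) ->
    {ae P, forall x, forall i : 'I_k, 0 <= Y x ord0 i <= 1} ->
    {ae P, forall x, forall i j : 'I_k, (i <= j)%N -> Y x ord0 i <= Y x ord0 j} ->
  forall s : R, 0 < s ->
  forall r : R, cstar * k%:R <= r ->
    (quant_D P Y r s <= (kappa / k%:R * expR (- (r / k%:R)))%:E)%E.
Proof.
exists 3, (2 * expR 1); split => //; split; first by rewrite mulr_gt0 ?expR_gt0.
move=> k k0 d T P Y mY Y01 Ymon s s0 r kr.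
have k_gt0 : (0 : R) < k%:R by rewrite ltr0n.
set u := r / k%:R.
have E3 : 3 <= expR (u - 1).
  by apply: le_trans (expR_ge1Dx _); rewrite addrC subrK ler_pdivlMr.
have [N N0 /andP[NE EN]] := exists_nat_between _ E3.
have Nk0 : (0 < N * k)%N by rewrite muln_gt0 N0.
apply: (@le_trans _ _ ((N * k)%:R^-1)%:E).
  apply: (quant_D_le (monotone_grid k (N * k))) => //.
  - exact: monotone_grid_neq0.
  - apply: le_trans (ln_card_monotone_grid k0 N0) _.
    rewrite mulrC -ler_pdivlMr // -/u -lerBrDl.
    by rewrite -[leRHS]expRK ler_ln ?posrE ?expR_gt0 ?ltr0n.
  - apply: filterS2 Y01 Ymon => x Yx01 Yxmon.
    have [a aG Ya] := monotone_grid_approx (Y x) Nk0 Yx01 Yxmon.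
    by apply: le_trans (codebook_dist_le (Y x) aG) _; rewrite lee_fin.
have expR_u : expR u <= 2 * expR 1 * N%:R.
  by rewrite -[u](subrK 1) addrC expRD -mulrA mulrCA ler_wpM2l ?expR_ge0.
rewrite lee_fin natrM invfM expRN mulrC -mulrA [leRHS]mulrC -mulrA.
rewrite ler_pM2l ?invr_gt0 // mulrC ler_pdivlMr ?expR_gt0 // mulrC.
by rewrite ler_pdivrMr ?ltr0n.
Qed.
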